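(* Let $p$ be an odd prime and let $a,b_1,b_2,c$ be integers such that $0\le a<p$, $0<c\le p$, $0\le b_2-c+1<p$, $0\le b_1+b_2-c+1<p$, and $p-1\le a+b_1+b_2-c+1<2p-1$. Then in $\mathbb{F}_p$ $$\int_{[1;1]_p}t^a(1-t)^{b_1}(s-t)^{p-c}(1-s)^{b_2}\,dt\,ds=\frac{a!\,(b_1+b_2-c+1)!}{(a+b_1+b_2-c+2-p)!}\cdot\frac{(p-c)!\,b_2!}{(b_2-c+1)!}.$$
   Context: For a polynomial $P(x_1,\dots,x_k)=\sum_d c_dx_1^{d_1}\cdots x_k^{d_k}$ with coefficients in $\mathbb{F}_p$ and $l\in\mathbb{Z}_{>0}^k$, the $\mathbb{F}_p$-integral $\int_{[l_1,\dots,l_k]_p}P\,dx$ is the coefficient $c_{l_1p-1,\dots,l_kp-1}$. Thus the left-hand side is the coefficient of $t^{p-1}s^{p-1}$ in the polynomial reduced mod $p$. Factorials are taken in $\mathbb{F}_p$. *)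

From HB Require Import structures.
From mathcomp Require Import all_boot all_order all_algebra.
Set Implicit Arguments. Unset Strict Implicit. Unset Printing Implicit Defensive.
Import GRing.Theory.
Local Open Scope ring_scope.

(* Bivariate polynomials in (t, s) over a ring R are represented as
   polynomials in s whose coefficients are polynomials in t:
   P : {poly {poly R}}, and the coefficient of t^i s^j is (P`_j)`_i. *)
Definition var_t {R : nzRingType} : {poly {poly R}} := ('X)%:P.
Definition var_s {R : nzRingType} : {poly {poly R}} := 'X.

(* F_p-integral over [l1, l2]_p: the coefficient of t^(l1 p - 1) s^(l2 p - 1). *)
Definition Fp_integral2 {R : nzRingType} (p l1 l2 : nat) (P : {poly {poly R}}) : R :=
  (P`_(l2 * p).-1)`_(l1 * p).-1.

(* View the integrand as a polynomial in s over F_p[t]: it is Q(t) f(s - t) with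
   Q = t^a (1-t)^b1 and f(S) = S^(p-c) ((1-t) - S)^b2.  In characteristic p the
   coefficient of S^(p-1) of a polynomial of degree < 2p-1 is unchanged by the
   translation S |-> S - v, because (S - v)^p = S^p - v^p.  So the s-coefficient is
   read off f, giving the signed binomial (-1)^(c-1) C(b2, c-1) times (1-t)^(b2+1-c),
   and the t-coefficient of the remaining product is again a signed binomial.  Both
   become factorials through Wilson's theorem in the split form
   k! (p-1-k)! = (-1)^(k+1). *)

From HB Require Import structures.
From mathcomp Require Import all_boot all_order all_algebra.
From mathcomp Require Import ring zify.
Set Implicit Arguments.
Unset Strict Implicit.
Unset Printing Implicit Defensive.

Import GRing.Theory.
Local Open Scope ring_scope.

Section PositiveCharacteristic.

Variables (R : comNzRingType) (p : nat).
Hypothesis charRp : p \in [pchar R].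

Lemma coef_pred_exp_XsubC (v : R) i : (i < p.*2.-1)%N ->
  (('X - v%:P) ^+ i)`_p.-1 = (i == p.-1)%:R.
Proof.
have p_gt1 := prime_gt1 (pcharf_prime charRp).
move=> lt_i_2p; have [lt_ip | le_pi] := ltnP i p.
  have [lt_ip1 | gt_ip1 | ->] := ltngtP i p.-1.
  - by rewrite nth_default ?size_exp_XsubC // ltn_eqF.
  - lia.
  by rewrite -[RHS](eqP (monic_exp p.-1 (monicXsubC v))) lead_coefE size_exp_XsubC.
have charPp : p \in [pchar {poly R}] by rewrite pchar_poly.
rewrite -(subnKC le_pi) exprD -[_ ^+ p](pFrobenius_autE charPp).
rewrite pFrobenius_autB_comm; last exact: mulrC.
rewrite !pFrobenius_autE -polyC_exp mulrBl coefB coefXnM coefCM.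
rewrite ltn_predL (ltnW p_gt1) nth_default ?size_exp_XsubC; last by lia.
by rewrite mulr0 subr0 gtn_eqF //; lia.
Qed.

Lemma coef_pred_comp_XsubC (f : {poly R}) v : (size f <= p.*2.-1)%N ->
  (f \Po ('X - v%:P))`_p.-1 = f`_p.-1.
Proof.
move=> size_f; rewrite comp_polyE -[in RHS](coefK f) poly_def !coef_sum.
apply: eq_bigr => i _; rewrite !coefZ coefXn eq_sym coef_pred_exp_XsubC //.
exact: leq_trans (ltn_ord i) size_f.
Qed.

Lemma Wilson_pchar k : (k < p)%N -> k`!%:R * (p.-1 - k)`!%:R = (-1) ^+ k.+1 :> R.
Proof.
have p_prime := pcharf_prime charRp; have p_gt1 := prime_gt1 p_prime.
elim: k => [|k IHk] lt_kp.
  rewrite fact0 mul1r subn0 expr1; apply/eqP.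
  by rewrite -addr_eq0 -(natrD _ _ 1) addn1 -(dvdn_pcharf charRp) -Wilson ?p_prime.
have pred_sub : (p.-1 - k = (p.-1 - k.+1).+1)%N by lia.
have natr_sub : (p.-1 - k.+1).+1%:R = - k.+1%:R :> R.
  rewrite -pred_sub (_ : p.-1 - k = p - k.+1)%N; last by lia.
  by rewrite natrB 1?ltnW // (pcharf0 charRp) sub0r.
have := IHk (ltnW lt_kp); rewrite pred_sub factS natrM natr_sub => {}IHk.
by rewrite factS natrM exprS -IHk; ring.
Qed.

End PositiveCharacteristic.

Lemma natr_fact_neq0_pchar (R : idomainType) p k : p \in [pchar R] -> (k < p)%N ->
  k`!%:R != 0 :> R.
Proof.
move=> charRp; elim: k => [|k IHk] lt_kp; first by rewrite oner_eq0.
by rewrite factS natrM mulf_neq0 ?IHk ?(ltnW lt_kp) // -(dvdn_pcharf charRp) gtnNdvd.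
Qed.

Lemma signed_bin_pchar (F : fieldType) p n k : p \in [pchar F] ->
  (k < p)%N -> (k <= n)%N -> (n - k < p)%N ->
  (-1) ^+ k *+ 'C(n, k) = - ((p.-1 - k)`!%:R * n`!%:R / (n - k)`!%:R) :> F.
Proof.
move=> charFp lt_kp le_kn lt_nk_p.
rewrite -(bin_fact le_kn) !natrM mulrCA !mulrA (mulfK (natr_fact_neq0_pchar charFp lt_nk_p)).
by rewrite -mulrA [_ * k`!%:R]mulrC Wilson_pchar // exprS mulN1r mulrN opprK mulr_natl.
Qed.

Lemma coef_exp_CsubX (R : comNzRingType) (u : R) m k :
  ((u%:P - 'X) ^+ m)`_k = (-1) ^+ k * u ^+ (m - k) *+ 'C(m, k).
Proof.
have -> : (u%:P - 'X) ^+ m = \poly_(i < m.+1) ((-1) ^+ i * u ^+ (m - i) *+ 'C(m, i)).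
  rewrite exprBn poly_def; apply: eq_bigr => i _.
  by rewrite -mul_polyC rmorphMn rmorphM /= !rmorphXn /= rmorphN1 mulrnAl.
by rewrite coef_poly; case: ltnP => // /bin_small->.
Qed.

Lemma coef_Xn_mul_exp_CsubX (R : comNzRingType) (u : R) j m k : (j <= k)%N ->
  ('X^j * (u%:P - 'X) ^+ m)`_k = (-1) ^+ (k - j) * u ^+ (m - (k - j)) *+ 'C(m, k - j).
Proof. by move=> le_jk; rewrite coefXnM ltnNge le_jk coef_exp_CsubX. Qed.

Lemma size_Xn_mul_exp_CsubX (R : nzRingType) (u : R) j m :
  (size ('X^j * (u%:P - 'X) ^+ m)%R <= (j + m).+1)%N.
Proof.
apply: leq_trans (size_polyMleq _ _) _; rewrite size_polyXn.
have := size_poly_exp_leq (u%:P - 'X) m.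
rewrite -opprB size_polyN size_XsubC mul1n; lia.
Qed.

Lemma integrand_comp_XsubC (R : comNzRingType) a b1 b2 e :
  (var_t : {poly {poly R}}) ^+ a * (1 - var_t) ^+ b1 * (var_s - var_t) ^+ e * (1 - var_s) ^+ b2
  = ('X ^+ a * (1 - 'X) ^+ b1)%:P * (('X^e * ((1 - 'X)%:P - 'X) ^+ b2) \Po ('X - 'X%:P)).
Proof.
rewrite comp_polyM !rmorphXn /= comp_polyX comp_polyB comp_polyC comp_polyX.
by rewrite rmorphM /= !rmorphXn /= !rmorphB /= rmorph1 opprB addrA subrK !mulrA.
Qed.

Theorem theorem3p7 (p a b1 b2 c : nat)
  (hp : prime p) (hodd : odd p)
  (ha : (a < p)%N) (hc0 : (0 < c)%N) (hcp : (c <= p)%N)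
  (hb2 : (c <= b2 + 1)%N) (hb2p : (b2 + 1 - c < p)%N)
  (hb12 : (b1 + b2 + 1 - c < p)%N)
  (hlo : (p.-1 <= a + b1 + b2 + 1 - c)%N)
  (hhi : (a + b1 + b2 + 1 - c < (2 * p).-1)%N) :
  Fp_integral2 p 1 1
    ((var_t : {poly {poly 'F_p}}) ^+ a * (1 - var_t) ^+ b1
       * (var_s - var_t) ^+ (p - c) * (1 - var_s) ^+ b2)
  = (a`!%:R * (b1 + b2 + 1 - c)`!%:R / (a + b1 + b2 + 2 - c - p)`!%:R)
    * ((p - c)`!%:R * b2`!%:R / (b2 + 1 - c)`!%:R).
Proof.
have p_gt1 := prime_gt1 hp; have charFp := pchar_Fp hp.
have sub_pc : (p.-1 - (p - c) = c.-1)%N by lia.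
have sub_b2 : (b2 - c.-1 = b2 + 1 - c)%N by lia.
have bin_s : (-1) ^+ c.-1 *+ 'C(b2, c.-1)
    = - ((p - c)`!%:R * b2`!%:R / (b2 + 1 - c)`!%:R) :> 'F_p.
  rewrite (signed_bin_pchar charFp); [|lia..].
  by rewrite sub_b2 (_ : p.-1 - c.-1 = p - c)%N //; lia.
have bin_t : (-1) ^+ (p.-1 - a) *+ 'C(b1 + b2 + 1 - c, p.-1 - a)
    = - (a`!%:R * (b1 + b2 + 1 - c)`!%:R / (a + b1 + b2 + 2 - c - p)`!%:R) :> 'F_p.
  rewrite (signed_bin_pchar charFp); [|lia..].
  rewrite (_ : p.-1 - (p.-1 - a) = a)%N; last by lia.
  rewrite (_ : b1 + b2 + 1 - c - (p.-1 - a) = a + b1 + b2 + 2 - c - p)%N //; lia.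
rewrite integrand_comp_XsubC /Fp_integral2 !mul1n coefCM.
rewrite coef_pred_comp_XsubC ?pchar_poly //; last first.
  by apply: leq_trans (size_Xn_mul_exp_CsubX _ _ _) _; lia.
rewrite coef_Xn_mul_exp_CsubX ?sub_pc ?sub_b2; last by lia.
have -> : ('X : {poly 'F_p}) ^+ a * (1 - 'X) ^+ b1
      * ((-1) ^+ c.-1 * (1 - 'X) ^+ (b2 + 1 - c) *+ 'C(b2, c.-1))
    = ((-1) ^+ c.-1 *+ 'C(b2, c.-1))%:P * ('X^a * (1%:P - 'X) ^+ (b1 + b2 + 1 - c)).
  rewrite (_ : b1 + b2 + 1 - c = b1 + (b2 + 1 - c))%N; last by lia.
  by rewrite rmorphMn rmorphXn rmorphN1 polyC1 exprD; ring.
rewrite coefCM coef_Xn_mul_exp_CsubX; last by lia.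
by rewrite expr1n mulr1 bin_s bin_t mulrNN mulrC.
Qed.
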